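(* Let $(X,r)$ and $(X',r')$ be non-degenerate involutive set-theoretic solutions of the Yang–Baxter equation with $|X|=|X'|=n$, and let $(\mathcal{X}^2,\tilde r)$, $(\mathcal{X}'^2,\tilde r')$ be their induced pairs. (i) If $(X,r)$ and $(X',r')$ are different (both on the index set $\{1,\dots,n\}$, with $r\neq r'$), then $(\mathcal{X}^2,\tilde r)$ and $(\mathcal{X}'^2,\tilde r')$ are different. (ii) If $(X,r)$ and $(X',r')$ are isomorphic, then $(\mathcal{X}^2,\tilde r)$ and $(\mathcal{X}'^2,\tilde r')$ are isomorphic.
   Context: A set-theoretic solution is $r:X\times X\to X\times X$, $r(x,y)=(\sigma_x(y),\gamma_y(x))$, with $r^{12}r^{23}r^{12}=r^{23}r^{12}r^{23}$; non-degenerate: all $\sigma_x,\gamma_x$ bijective; involutive: $r\circ r=\mathrm{Id}$. Two solutions $(X,r)$, $(X',r')$ are isomorphic if there is a bijection $\mu:X\to X'$ with $(\mu\times\mu)\circ r=r'\circ(\mu\times\mu)$. Induced pair of a solution on $\{1,\dots,n\}$: $\mathcal{X}^2=\{T_i^k:1\le i,k\le n\}$ ($n^2$ symbols in bijection with $X\times X$), $\tilde r(T_i^k,T_j^l)=(T_{\sigma_i(j)}^{\sigma_k(l)},T_{\gamma_j(i)}^{\gamma_l(k)})$. *)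

From mathcomp Require Import all_boot.
Set Implicit Arguments. Unset Strict Implicit. Unset Printing Implicit Defensive.

Section Sol.
Variable X : Type.
Implicit Types r : X * X -> X * X.

Definition sigma r (x y : X) : X := (r (x, y)).1.
Definition gamma r (y x : X) : X := (r (x, y)).2.

Definition r12 r (t : X * X * X) : X * X * X :=
  let: (x, y, z) := t in let: (a, b) := r (x, y) in (a, b, z).
Definition r23 r (t : X * X * X) : X * X * X :=
  let: (x, y, z) := t in let: (b, c) := r (y, z) in (x, b, c).

Definition braided r : Prop :=
  forall t, r12 r (r23 r (r12 r t)) = r23 r (r12 r (r23 r t)).
Definition nondegenerate r : Prop :=
  forall x, bijective (sigma r x) /\ bijective (gamma r x).
Definition involutive_sol r : Prop := forall p, r (r p) = p.

Definition nd_inv_solution r : Prop :=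
  [/\ braided r, nondegenerate r & involutive_sol r].
End Sol.

Definition sol_iso (X X' : Type) (r : X * X -> X * X) (r' : X' * X' -> X' * X')
  : Prop :=
  exists mu : X -> X', bijective mu /\
    forall x y, (mu (r (x, y)).1, mu (r (x, y)).2) = r' (mu x, mu y).

(* Induced pair: T_i^k is encoded as the pair (i, k) : X * X, and
   r~(T_i^k, T_j^l) = (T_{sigma_i(j)}^{sigma_k(l)}, T_{gamma_j(i)}^{gamma_l(k)}). *)
Definition induced (X : Type) (r : X * X -> X * X)
  (p : (X * X) * (X * X)) : (X * X) * (X * X) :=
  let: ((i, k), (j, l)) := p in
  ((sigma r i j, sigma r k l), (gamma r j i, gamma r l k)).

(* The induced pair is the "square" of r: on diagonal pairs it reads
   r~(T_i^i, T_j^j) = (T_a^a, T_b^b) where r(i, j) = (a, b), so r is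
   recovered from r~; and an isomorphism mu of solutions induces the
   isomorphism T_i^k |-> T_{mu i}^{mu k} of induced pairs.  Neither argument
   uses the Yang-Baxter, non-degeneracy or involutivity hypotheses. *)

From mathcomp Require Import all_boot.
From Stdlib Require Import FunctionalExtensionality.

Set Implicit Arguments.
Unset Strict Implicit.
Unset Printing Implicit Defensive.

Definition sqmap (X Y : Type) (f : X -> Y) (p : X * X) : Y * Y :=
  (f p.1, f p.2).

Lemma sqmap_bij (X Y : Type) (f : X -> Y) :
  bijective f -> bijective (sqmap f).
Proof.
case=> g fK gK; exists (sqmap g) => -[a b]; rewrite /sqmap /=.
  by rewrite !fK.
by rewrite !gK.
Qed.

Lemma induced_diag (X : Type) (r : X * X -> X * X) (i j : X) :
  induced r ((i, i), (j, j)) =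
    (((r (i, j)).1, (r (i, j)).1), ((r (i, j)).2, (r (i, j)).2)).
Proof. by []. Qed.

Lemma induced_inj (X : Type) : injective (@induced X).
Proof.
move=> r r' eq_rr'; apply: functional_extensionality => -[i j].
have := congr1 (fun f => f ((i, i), (j, j))) eq_rr'.
rewrite !induced_diag => -[eq1 _ eq2 _].
by rewrite [r _]surjective_pairing [r' _]surjective_pairing eq1 eq2.
Qed.

Lemma induced_iso (X X' : Type) (r : X * X -> X * X) (r' : X' * X' -> X' * X') :
  sol_iso r r' -> sol_iso (induced r) (induced r').
Proof.
case=> mu [mu_bij mu_iso]; exists (sqmap mu); split; first exact: sqmap_bij.
move=> [i k] [j l]; rewrite /sqmap /induced /sigma /gamma /=.
by rewrite -mu_iso -[r' (mu k, _)]mu_iso.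
Qed.

Theorem lemma3p7 (n : nat) (r r' : 'I_n * 'I_n -> 'I_n * 'I_n) :
  nd_inv_solution r -> nd_inv_solution r' ->
  (r <> r' -> induced r <> induced r') /\
  (sol_iso r r' -> sol_iso (induced r) (induced r')).
Proof.
move=> _ _; split; last exact: induced_iso.
by move=> neq_rr' /induced_inj.
Qed.
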